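(* Let $q$ be a prime power, $n \le m$, and let $\mathcal G(n,k)$ be a Gabidulin code of length $n$ and dimension $k$ over $\mathbb F_{q^m}$ with minimum rank distance $d = n-k+1$. Let $\tau < d$ and $\mathbf r \in \mathbb F_{q^m}^n$. Let $\mathbf c_1, \dots, \mathbf c_\ell$ be distinct codewords of $\mathcal G(n,k)$ with $\mathrm{rank}(\mathbf r - \mathbf c_i) \le \tau$ for all $i = 1,\dots,\ell$. Let $i \ne j$, $t_i = \mathrm{rank}(\mathbf r - \mathbf c_i)$, $t_j = \mathrm{rank}(\mathbf r - \mathbf c_j)$, with $\lfloor (d-1)/2 \rfloor < t_i, t_j \le \tau$. Then the row spaces $\mathcal R(\mathbf r - \mathbf c_i)$ and $\mathcal R(\mathbf r - \mathbf c_j)$ have no common subspace of dimension at least $t_i + t_j - d + 1$.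
   Context: A linearized polynomial over $\mathbb F_{q^m}$ is $f(x) = \sum_{i} f_i x^{q^i}$ with $f_i \in \mathbb F_{q^m}$; its $q$-degree is the largest $i$ with $f_i \neq 0$. The Gabidulin code $\mathcal G(n,k)$ is $\{(f(\alpha_0), \dots, f(\alpha_{n-1})) : \deg_q f < k\}$ for fixed $\alpha_0,\dots,\alpha_{n-1} \in \mathbb F_{q^m}$ linearly independent over $\mathbb F_q$. Fixing a basis of $\mathbb F_{q^m}$ over $\mathbb F_q$, each $\mathbf x \in \mathbb F_{q^m}^n$ corresponds to a matrix $\mathbf X \in \mathbb F_q^{m\times n}$; $\mathrm{rank}(\mathbf x)$ is the $\mathbb F_q$-rank of $\mathbf X$ and $\mathcal R(\mathbf x)$ is the row space of $\mathbf X$ over $\mathbb F_q$ (a subspace of $\mathbb F_q^n$). The minimum rank distance $d = \min\{\mathrm{rank}(\mathbf c) : \mathbf c \in \mathcal G(n,k), \mathbf c \ne 0\}$ equals $n-k+1$. *)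

From HB Require Import structures.
From mathcomp Require Import all_boot all_order all_algebra all_field.
Set Implicit Arguments. Unset Strict Implicit. Unset Printing Implicit Defensive.
Import GRing.Theory.
Local Open Scope ring_scope.

(* F = F_q (a finite field, so q = #|F| is a prime power);
   L = F_{q^m}, a field extension of F of degree m = \dim {:L}. *)

Definition lin_eval (F : finFieldType) (L : fieldExtType F) (k : nat)
  (f : 'I_k -> L) (a : L) : L :=
  \sum_(i < k) f i * a ^+ (#|F| ^ i)%N.

Definition gabidulin (F : finFieldType) (L : fieldExtType F) (n k : nat)
  (alpha : 'rV[L]_n) (c : 'rV[L]_n) : Prop :=
  exists f : 'I_k -> L, c = \row_j lin_eval f (alpha 0 j).

(* The m x n matrix over F of a vector x in L^n, w.r.t. the fixed basis
   vbasis {:L} of L over F. *)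
Definition mat_of (F : finFieldType) (L : fieldExtType F) (n : nat)
  (x : 'rV[L]_n) : 'M[F]_(\dim {:L}%VS, n) :=
  \matrix_(i, j) coord (vbasis fullv) i (x 0 j).

Definition rk (F : finFieldType) (L : fieldExtType F) (n : nat)
  (x : 'rV[L]_n) : nat := \rank (mat_of x).

(* Two distinct codewords differ by a nonzero codeword, whose rank is at least
   d = n - k + 1: otherwise its matrix has a kernel of dimension >= k, and
   x |-> sum_j x_j alpha_j maps it injectively into the roots of a linearized
   polynomial of degree q^(k-1), which has fewer than q^k roots.  Since
   (r - c_j) - (r - c_i) = c_i - c_j, the two error matrices A, B satisfy
   d <= rank (B - A) <= dim (A + B) = t_i + t_j - dim (A :&: B), so every
   common subspace of their row spaces has dimension at most t_i + t_j - d. *)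
From HB Require Import structures.
From mathcomp Require Import all_boot all_order all_algebra all_field.
From mathcomp Require Import fingroup pgroup abelian.
From mathcomp Require Import zify.
Set Implicit Arguments. Unset Strict Implicit. Unset Printing Implicit Defensive.
Import GRing.Theory.
Local Open Scope ring_scope.

Lemma mxrank_sub_cap (F : fieldType) m n (A B : 'M[F]_(m, n)) :
  (\rank (A - B)%R + \rank (A :&: B)%MS <= \rank A + \rank B)%N.
Proof.
rewrite -(mxrank_sum_cap A B) leq_add2r mxrankS // addmx_sub_adds //.
by rewrite eqmx_opp.
Qed.

Section LinearizedPolynomial.
Variables (F : finFieldType) (L : fieldExtType F).
Local Notation q := #|F|.

Lemma pchar_card_pnat : [pchar L].-nat q.
Proof.
have [p _ pcharFp] := finPcharP F.
have := abelem_pgroup (fin_ring_pchar_abelem pcharFp).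
rewrite /pgroup cardsT; apply: etrans; apply: eq_pnat; apply: pcharf_eq.
by rewrite (pchar_lalg L).
Qed.

Lemma exprDn_card_pow (x y : L) i :
  (x + y) ^+ (q ^ i) = x ^+ (q ^ i) + y ^+ (q ^ i).
Proof. by apply: exprDn_pchar; rewrite pnatX pchar_card_pnat. Qed.

Lemma expf_card_pow (a : F) i : a ^+ (q ^ i) = a.
Proof.
elim: i => [|i IHi]; first by rewrite expn0 expr1.
by rewrite expnS exprM expf_card IHi.
Qed.

Variables (k : nat) (f : 'I_k -> L).

Lemma lin_eval_is_linear : linear (lin_eval f).
Proof.
move=> a x y; rewrite /lin_eval scaler_sumr -big_split; apply: eq_bigr => i _.
by rewrite exprDn_card_pow exprZn expf_card_pow mulrDr scalerAr.
Qed.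

HB.instance Definition _ :=
  GRing.isLinear.Build F L L *:%R (lin_eval f) lin_eval_is_linear.

Definition lin_poly : {poly L} := \sum_(i < k) f i *: 'X^(q ^ i).

Lemma horner_lin_poly a : lin_poly.[a] = lin_eval f a.
Proof.
rewrite horner_sum; apply: eq_bigr => i _.
by rewrite hornerZ hornerXn.
Qed.

Lemma size_lin_poly : (0 < k)%N -> (size lin_poly <= (q ^ k.-1).+1)%N.
Proof.
move=> k_gt0; apply: (big_ind (fun p : {poly L} => size p <= (q ^ k.-1).+1)%N).
- by rewrite size_poly0.
- by move=> p1 p2 le1 le2; rewrite (leq_trans (size_polyD _ _)) // geq_max le1.
- move=> i _; rewrite (leq_trans (size_scale_leq _ _)) // size_polyXn ltnS.
  by rewrite leq_pexp2l ?(ltnW (finNzRing_gt1 F)) // -ltnS prednK.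
Qed.

Lemma lin_eval_roots_inj_lt d (g : 'rV[F]_d -> L) :
  (0 < k)%N -> lin_poly != 0 -> injective g ->
  (forall u, lin_eval f (g u) = 0) -> (d < k)%N.
Proof.
move=> k_gt0 nz_f inj_g g_root.
pose s := [seq g u | u : 'rV[F]_d].
have uniq_s : uniq s by rewrite map_inj_uniq ?enum_uniq.
have roots_s : all (root lin_poly) s.
  by apply/allP => _ /mapP[u _ ->]; rewrite /root horner_lin_poly g_root.
have := leq_trans (max_poly_roots nz_f roots_s uniq_s) (size_lin_poly k_gt0).
rewrite size_map -cardE card_mx mul1n ltnS leq_exp2l ?finNzRing_gt1 //.
by move: k_gt0; clear; lia.
Qed.

End LinearizedPolynomial.

Section Gabidulin.
Variables (F : finFieldType) (L : fieldExtType F) (n k : nat) (alpha : 'rV[L]_n).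
Hypothesis alpha_free : free [seq alpha 0 j | j <- enum 'I_n].

Definition lincomb (v : 'rV[L]_n) (x : 'rV[F]_n) : L := \sum_j x 0 j *: v 0 j.

Lemma lincomb_inj : injective (lincomb alpha).
Proof.
move=> x y eq_xy.
pose X := map_tuple (fun j => alpha 0 j) (ord_tuple n).
have free_X : free X by move: alpha_free; rewrite -val_ord_tuple.
have X_E (i : 'I_n) : X`_i = alpha 0 i.
  by rewrite (nth_map i) ?nth_ord_enum // val_ord_tuple size_enum_ord.
apply/rowP => j; apply/eqP; rewrite -subr_eq0; apply/eqP.
have := freeP free_X (fun i => (x - y) 0 i) _ j; rewrite !mxE; apply.
rewrite -[RHS](subrr (lincomb alpha x)) {2}eq_xy /lincomb -sumrB.
by apply: eq_bigr => i _; rewrite X_E !mxE scalerBl.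
Qed.

Lemma mulmx_tr_mat_of (v : 'rV[L]_n) x :
  x *m (mat_of v)^T = \row_i coord (vbasis fullv) i (lincomb v x).
Proof.
apply/rowP => i; rewrite !mxE /lincomb linear_sum; apply: eq_bigr => j _.
by rewrite linearZ !mxE.
Qed.

Lemma lincomb_lin_eval (f : 'I_k -> L) x :
  lincomb (\row_j lin_eval f (alpha 0 j)) x = lin_eval f (lincomb alpha x).
Proof.
by rewrite /lincomb linear_sum; apply: eq_bigr => j _; rewrite linearZ mxE.
Qed.

Lemma mat_ofB (x y : 'rV[L]_n) : mat_of (x - y) = mat_of x - mat_of y.
Proof. by apply/matrixP => i j; rewrite !mxE linearB. Qed.

Lemma gabidulinB c1 c2 :
  gabidulin k alpha c1 -> gabidulin k alpha c2 -> gabidulin k alpha (c1 - c2).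
Proof.
move=> [f1 ->] [f2 ->]; exists (fun i => f1 i - f2 i).
apply/rowP => j; rewrite !mxE /lin_eval -sumrB.
by apply: eq_bigr => i _; rewrite mulrBl.
Qed.

Lemma gabidulin_rank c :
  (0 < k <= n)%N -> gabidulin k alpha c -> c != 0 -> (n - k < rk c)%N.
Proof.
move=> /andP[k_gt0 le_kn] [f def_c] nz_c.
set K := kermx (mat_of c)^T.
have zeros u : lin_eval f (lincomb alpha (u *m row_base K)) = 0.
  have /sub_kermxP : (u *m row_base K <= K)%MS.
    by rewrite (submx_trans (submxMl u _)) ?eq_row_base.
  rewrite mulmx_tr_mat_of => /matrixP coord0.
  rewrite -lincomb_lin_eval -def_c (coord_vbasis (memvf (lincomb c _))).
  by apply: big1 => i _; have := coord0 0 i; rewrite !mxE => ->; rewrite scale0r.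
have nz_f : lin_poly f != 0.
  apply: contraNneq nz_c => f0; rewrite def_c; apply/eqP/rowP => j.
  by rewrite !mxE -horner_lin_poly f0 horner0.
have inj : injective (fun u => lincomb alpha (u *m row_base K)).
  by move=> u w /lincomb_inj/(row_free_inj (row_base_free K)).
have := lin_eval_roots_inj_lt k_gt0 nz_f inj zeros.
rewrite mxrank_ker mxrank_tr /rk; move: le_kn; clear; lia.
Qed.

End Gabidulin.


Theorem lemma1 (F : finFieldType) (L : fieldExtType F) (n k : nat)
  (alpha : 'rV[L]_n)
  (Hnm : (n <= \dim {:L}%VS)%N)
  (Hk : (0 < k <= n)%N)
  (Halpha : free [seq alpha 0 j | j <- enum 'I_n])
  (tau : nat) (Htau : (tau < n - k + 1)%N)
  (r : 'rV[L]_n) (ell : nat) (c : 'I_ell -> 'rV[L]_n)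
  (Hcode : forall i, gabidulin k alpha (c i))
  (Hdist : injective c)
  (Hrad : forall i, (rk (r - c i) <= tau)%N)
  (i j : 'I_ell) (Hij : i != j)
  (Hti : ((n - k + 1).-1./2 < rk (r - c i) <= tau)%N)
  (Htj : ((n - k + 1).-1./2 < rk (r - c j) <= tau)%N) :
  forall (p : nat) (U : 'M[F]_(p, n)),
    (U <= mat_of (r - c i))%MS -> (U <= mat_of (r - c j))%MS ->
    (\rank U < rk (r - c i) + rk (r - c j) - (n - k + 1) + 1)%N.
Proof.
move=> p U sUi sUj.
have nz_cij : c i - c j != 0 by rewrite subr_eq0 (inj_eq Hdist).
have dist := gabidulin_rank Halpha Hk (gabidulinB (Hcode i) (Hcode j)) nz_cij.
have eq_diff : c i - c j = (r - c j) - (r - c i).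
  by rewrite opprB [RHS]addrC addrA subrK.
rewrite eq_diff /rk mat_ofB in dist.
have rank_U_le : (\rank U + (n - k + 1) <= rk (r - c j) + rk (r - c i))%N.
  apply: leq_trans (mxrank_sub_cap (mat_of (r - c j)) (mat_of (r - c i))).
  rewrite addnC addn1 leq_add //.
  by rewrite mxrankS // sub_capmx sUj sUi.
by move: rank_U_le; clear; lia.
Qed.
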